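(* Let $(A,\succ,\prec)$ be a Leibniz-dendriform algebra and $r\in A\otimes A$ such that $S(r)=0$ and $r+\tau(r)$ is invariant (so $(A,\succ,\prec,\Delta_{\succ,r},\Delta_{\prec,r})$ is quasi-triangular). Then $\tau(r)$ also satisfies $S(\tau(r))=0$ and $\tau(r)+\tau(\tau(r))$ is invariant, so $(A,\succ,\prec,\Delta_{\succ,\tau(r)},\Delta_{\prec,\tau(r)})$ is quasi-triangular. If moreover $T_{r+\tau(r)}$ is a linear isomorphism (factorizable case), then so is $T_{\tau(r)+r}$, so the latter bialgebra is factorizable as well.
   Context: $\langle\cdot,\cdot\rangle$ is the natural pairing, $I$ the identity, $\tau(a\otimes b)=b\otimes a$. A Leibniz-dendriform algebra is a vector space $A$ with bilinear operations $\succ,\prec$ such that, with $x\circ y:=x\succ y+x\prec y$, for all $x,y,z$: $(x\circ y)\succ z=x\succ(y\succ z)-y\succ(x\succ z)$, $y\prec(x\circ z)+(x\succ y)\prec z=x\succ(y\prec z)$, $x\prec(y\circ z)=(x\prec y)\prec z+y\succ(x\prec z)$. Write $x\odot y:=x\succ y+y\prec x$, $x\star y:=x\circ y+y\circ x$; $L_*(x)y=x*y$, $R_*(x)y=y*x$; $L_\odot:=L_\succ+R_\prec$, $L_\star:=L_\circ+R_\circ$. For $r=\sum_ia_i\otimes b_i$: $T_r:A^*\to A$, $\langle T_r(\zeta),\eta\rangle=\langle r,\zeta\otimes\eta\rangle$; $S(r):=\sum_{i,j}\big(a_i\otimes a_j\otimes (b_j\circ b_i)-a_i\otimes (b_i\odot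 a_j)\otimes b_j-(a_i\succ a_j)\otimes b_i\otimes b_j\big)$. $s\in A\otimes A$ is invariant if for all $x$: $(L_\odot(x)\otimes I-I\otimes R_\circ(x))s=0$ and $(L_\star(x)\otimes I-I\otimes R_\prec(x))\tau(s)=0$. Coboundary maps: $\Delta_{\succ,r}(x)=(L_\odot(x)\otimes I-I\otimes R_\circ(x))r$, $\Delta_{\prec,r}(x)=(L_\star(x)\otimes I-I\otimes R_\prec(x))\tau(r)$. The bialgebra $(A,\succ,\prec,\Delta_{\succ,r},\Delta_{\prec,r})$ is called quasi-triangular if $S(r)=0$ and $r+\tau(r)$ is invariant, and factorizable if in addition $T_{r+\tau(r)}:A^*\to A$ is a linear isomorphism. *)

(* A finite-dimensional K-vector space A is modelled as 'rV[K]_n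
   (coordinates in the standard basis e_i = delta_mx 0 i). *)
From HB Require Import structures.
From mathcomp Require Import all_boot all_order all_algebra.
Set Implicit Arguments. Unset Strict Implicit. Unset Printing Implicit Defensive.
Import GRing.Theory.
Local Open Scope ring_scope.

Section LeibDend.
Variables (K : fieldType) (n : nat).

Definition vec := 'rV[K]_n.
(* A ⊗ A : coefficient matrix, entry (i,j) = coefficient of e_i ⊗ e_j *)
Definition tensor2 := 'M[K]_n.
(* A ⊗ A ⊗ A : coefficient function on triples of indices *)
Definition tensor3 := {ffun 'I_n * 'I_n * 'I_n -> K}.

Definition ebasis (i : 'I_n) : vec := delta_mx 0 i.

Definition is_bilinear (f : vec -> vec -> vec) : Prop :=
  (forall x, linear (f x)) /\ (forall y, linear (fun x => f x y)).

Variables (sp pr : vec -> vec -> vec). (* sp = ≻ , pr = ≺ *)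

Definition circ x y := sp x y + pr x y.
Definition odot x y := sp x y + pr y x.
Definition star x y := circ x y + circ y x.

Definition leibniz_dendriform : Prop :=
  (forall x y z, sp (circ x y) z = sp x (sp y z) - sp y (sp x z)) /\
  (forall x y z, pr y (circ x z) + pr (sp x y) z = sp x (pr y z)) /\
  (forall x y z, pr x (circ y z) = pr (pr x y) z + sp y (pr x z)).

Definition pure2 (x y : vec) : tensor2 := x^T *m y.
Definition pure3 (x y z : vec) : tensor3 :=
  [ffun ijk => x 0 ijk.1.1 * y 0 ijk.1.2 * z 0 ijk.2].

Definition scale3 (c : K) (f : tensor3) : tensor3 := [ffun k => c * f k].

Definition tau (r : tensor2) : tensor2 := r^T.

Definition tmap2 (f g : vec -> vec) (r : tensor2) : tensor2 :=
  \sum_(i < n) \sum_(j < n) r i j *: pure2 (f (ebasis i)) (g (ebasis j)).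

Definition L_odot x := fun y => odot x y.
Definition R_circ x := fun y => circ y x.
Definition L_star x := fun y => star x y.
Definition R_prec x := fun y => pr y x.

Definition invariant (s : tensor2) : Prop :=
  forall x : vec,
    tmap2 (L_odot x) id s - tmap2 id (R_circ x) s = 0 /\
    tmap2 (L_star x) id (tau s) - tmap2 id (R_prec x) (tau s) = 0.

Definition Sr (r : tensor2) : tensor3 :=
  \sum_(p < n) \sum_(q < n) \sum_(s < n) \sum_(t < n)
    scale3 (r p q * r s t)
      (pure3 (ebasis p) (ebasis s) (circ (ebasis t) (ebasis q))
       - pure3 (ebasis p) (odot (ebasis q) (ebasis s)) (ebasis t)
       - pure3 (sp (ebasis p) (ebasis s)) (ebasis q) (ebasis t)).

(* T_r : A^* -> A, A^* identified with 'rV_n via the dual basis;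
   <T_r zeta, eta> = <r, zeta ⊗ eta> = zeta *m r *m eta^T *)
Definition Tr (r : tensor2) (zeta : vec) : vec := zeta *m r.

Definition quasi_triangular (r : tensor2) : Prop :=
  Sr r = 0 /\ invariant (r + tau r).

Definition factorizable (r : tensor2) : Prop :=
  quasi_triangular r /\ bijective (Tr (r + tau r)).

End LeibDend.

From Pilot Require Import Defs.
From mathcomp Require Import all_boot all_order all_algebra.
From mathcomp Require Import ring.
Set Implicit Arguments. Unset Strict Implicit. Unset Printing Implicit Defensive.
Import GRing.Theory.
Local Open Scope ring_scope.

(** Let [s = r + tau r] and let [tpair Sterm] be the bilinear form with
    [tpair Sterm r r = S(r)]; by bilinearity
    [S(tau r) - S(r) = tpair Sterm (tau r) s - tpair Sterm s r].
    Since [s] is symmetric, its invariance also holds in transposed form, and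
    contracting against [s] kills two of the three terms of [S]: with [s] on
    the right the [circ]- and [odot]-terms cancel, leaving minus the [sp]-term;
    with [s] on the left the [odot]- and [sp]-terms cancel, leaving the
    [circ]-term, which is in turn minus the [sp]-term with [tau r] and [s]
    exchanged.  So both contractions agree and [S(tau r) = S(r)].
    Invariance is the only hypothesis used: the dendriform axioms and the
    bilinearity of [sp], [pr] play no role (in coordinates [sp] and [pr] are
    only ever evaluated on basis vectors). *)

Section FourfoldSums.
Variables (V : zmodType) (n : nat).

Lemma sum4D (f g : 'I_n -> 'I_n -> 'I_n -> 'I_n -> V) :
  \sum_a \sum_b \sum_c \sum_d (f a b c d + g a b c d) =
  \sum_a \sum_b \sum_c \sum_d f a b c d + \sum_a \sum_b \sum_c \sum_d g a b c d.
Proof.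
rewrite -big_split; apply: eq_bigr => a _; rewrite -big_split.
apply: eq_bigr => b _; rewrite -big_split; apply: eq_bigr => c _.
exact: big_split.
Qed.

Lemma sum4B (f g : 'I_n -> 'I_n -> 'I_n -> 'I_n -> V) :
  \sum_a \sum_b \sum_c \sum_d (f a b c d - g a b c d) =
  \sum_a \sum_b \sum_c \sum_d f a b c d - \sum_a \sum_b \sum_c \sum_d g a b c d.
Proof.
rewrite -sumrB; apply: eq_bigr => a _; rewrite -sumrB.
apply: eq_bigr => b _; rewrite -sumrB; apply: eq_bigr => c _.
exact: sumrB.
Qed.

Lemma sum4_swap (f : 'I_n -> 'I_n -> 'I_n -> 'I_n -> V) :
  \sum_a \sum_b \sum_c \sum_d f a b c d = \sum_c \sum_d \sum_a \sum_b f a b c d.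
Proof.
under eq_bigr => a _ do rewrite exchange_big /=.
under eq_bigr => a _ do under eq_bigr => c _ do rewrite exchange_big /=.
by rewrite exchange_big /=; apply: eq_bigr => c _; rewrite exchange_big.
Qed.

End FourfoldSums.

Section Contractions.
Variables (K : fieldType) (n : nat).
Local Notation e := (@ebasis K n).
Implicit Types (t : tensor2 K n) (f g : vec K n -> vec K n).

Lemma tmap2_entry f g t a b :
  tmap2 f g t a b = \sum_i \sum_j t i j * (f (e i) 0 a * g (e j) 0 b).
Proof.
rewrite /tmap2 summxE; apply: eq_bigr => i _; rewrite summxE.
by apply: eq_bigr => j _; rewrite !mxE big_ord1 !mxE.
Qed.

Lemma tmap2Dl f1 f2 g t : tmap2 (f1 \+ f2) g t = tmap2 f1 g t + tmap2 f2 g t.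
Proof.
apply/matrixP => a b; rewrite !mxE !tmap2_entry -big_split.
apply: eq_bigr => i _; rewrite -big_split; apply: eq_bigr => j _ /=.
by rewrite !mxE; ring.
Qed.

Lemma tmap2Dr f g1 g2 t : tmap2 f (g1 \+ g2) t = tmap2 f g1 t + tmap2 f g2 t.
Proof.
apply/matrixP => a b; rewrite !mxE !tmap2_entry -big_split.
apply: eq_bigr => i _; rewrite -big_split; apply: eq_bigr => j _ /=.
by rewrite !mxE; ring.
Qed.

Lemma tau_tmap2 f g t : tau (tmap2 f g t) = tmap2 g f (tau t).
Proof.
apply/matrixP => a b; rewrite mxE !tmap2_entry exchange_big /=.
by apply: eq_bigr => i _; apply: eq_bigr => j _; rewrite mxE; ring.
Qed.

Lemma tau_sym t : tau t + tau (tau t) = t + tau t.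
Proof. by rewrite /tau trmxK addrC. Qed.

End Contractions.

Section TensorPairing.
Variables (K : fieldType) (n : nat).
Implicit Types (t : tensor2 K n) (F G : 'I_n -> 'I_n -> 'I_n -> 'I_n -> tensor3 K n).

Definition tpair F t t' : tensor3 K n :=
  \sum_a \sum_b \sum_c \sum_d scale3 (t a b * t' c d) (F a b c d).

Lemma tpairE F t t' x :
  tpair F t t' x = \sum_a \sum_b \sum_c \sum_d t a b * t' c d * F a b c d x.
Proof.
rewrite sum_ffunE; apply: eq_bigr => a _; rewrite sum_ffunE.
apply: eq_bigr => b _; rewrite sum_ffunE; apply: eq_bigr => c _.
by rewrite sum_ffunE; apply: eq_bigr => d _; rewrite ffunE.
Qed.

Lemma tpairD F G t t' :
  tpair F t t' + tpair G t t' = tpair (fun a b c d => F a b c d + G a b c d) t t'.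
Proof.
apply/ffunP => x; rewrite ffunE !tpairE -sum4D.
by do 4! apply: eq_bigr => ? _; rewrite ffunE; ring.
Qed.

Lemma tpairB F G t t' :
  tpair F t t' - tpair G t t' = tpair (fun a b c d => F a b c d - G a b c d) t t'.
Proof.
apply/ffunP => x; rewrite !ffunE !tpairE -sum4B.
by do 4! apply: eq_bigr => ? _; rewrite !ffunE; ring.
Qed.

Lemma tpairDl F t1 t2 t' : tpair F (t1 + t2) t' = tpair F t1 t' + tpair F t2 t'.
Proof.
apply/ffunP => x; rewrite ffunE !tpairE -sum4D.
by do 4! apply: eq_bigr => ? _; rewrite mxE; ring.
Qed.

Lemma tpairDr F t t1 t2 : tpair F t (t1 + t2) = tpair F t t1 + tpair F t t2.
Proof.
apply/ffunP => x; rewrite ffunE !tpairE -sum4D.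
by do 4! apply: eq_bigr => ? _; rewrite mxE; ring.
Qed.

Lemma tpairC F t t' : tpair F t t' = tpair (fun a b c d => F c d a b) t' t.
Proof.
apply/ffunP => x; rewrite !tpairE sum4_swap.
by do 4! apply: eq_bigr => ? _; rewrite [t' _ _ * _]mulrC.
Qed.

Lemma tpair_taul F t t' : tpair F (tau t) t' = tpair (fun a b c d => F b a c d) t t'.
Proof.
apply/ffunP => x; rewrite !tpairE exchange_big /=.
by do 4! apply: eq_bigr => ? _; rewrite mxE.
Qed.

Lemma tpair_eq0 F t t' :
  (forall a b x, \sum_c \sum_d t' c d * F a b c d x = 0) -> tpair F t t' = 0.
Proof.
move=> F0; apply/ffunP => x; rewrite tpairE ffunE.
apply: big1 => a _; apply: big1 => b _.
rewrite -[RHS](mulr0 (t a b)) -[X in _ * X](F0 a b x) mulr_sumr.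
by apply: eq_bigr => c _; rewrite mulr_sumr; apply: eq_bigr => d _; rewrite mulrA.
Qed.

End TensorPairing.

Section SOperator.
Variables (K : fieldType) (n : nat) (sp pr : vec K n -> vec K n -> vec K n).
Local Notation e := (@ebasis K n).
Local Notation circ := (circ sp pr).
Local Notation odot := (odot sp pr).

Definition Sterm a b c d : tensor3 K n :=
  pure3 (e a) (e c) (circ (e d) (e b)) - pure3 (e a) (odot (e b) (e c)) (e d)
  - pure3 (sp (e a) (e c)) (e b) (e d).

Definition circ_term a b c d : tensor3 K n := pure3 (e a) (e c) (circ (e d) (e b)).

Definition sp_term a b c d : tensor3 K n := pure3 (sp (e a) (e c)) (e b) (e d).

Lemma Sr_tpair r : Sr sp pr r = tpair Sterm r r.
Proof. by []. Qed.

Lemma L_odotE x : L_odot sp pr x = sp x \+ pr^~ x. Proof. by []. Qed.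
Lemma R_circE x : R_circ sp pr x = sp^~ x \+ pr^~ x. Proof. by []. Qed.
Lemma L_starE x : L_star sp pr x = (sp x \+ pr x) \+ (sp^~ x \+ pr^~ x).
Proof. by []. Qed.
Lemma circE x : circ x = sp x \+ pr x. Proof. by []. Qed.
Lemma odotE x : odot^~ x = sp^~ x \+ pr x. Proof. by []. Qed.

Section SymmetricInvariant.
Variable w : tensor2 K n.
Hypotheses (w_sym : tau w = w) (w_inv : Defs.invariant sp pr w).

Lemma invariant_odot x : tmap2 (L_odot sp pr x) id w = tmap2 id (R_circ sp pr x) w.
Proof. by have [/eqP] := w_inv x; rewrite subr_eq0 => /eqP. Qed.

Lemma invariant_odot_tr x : tmap2 id (L_odot sp pr x) w = tmap2 (R_circ sp pr x) id w.
Proof. by have := congr1 (@tau K n) (invariant_odot x); rewrite !tau_tmap2 w_sym. Qed.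

Lemma invariant_star_tr x : tmap2 id (L_star sp pr x) w = tmap2 (R_prec pr x) id w.
Proof.
have [_ /eqP] := w_inv x; rewrite w_sym subr_eq0 => /eqP /(congr1 (@tau K n)).
by rewrite !tau_tmap2 w_sym.
Qed.

Lemma invariant_sp_circ x : tmap2 (sp x) id w + tmap2 id (circ x) w = 0.
Proof.
have := invariant_odot x; have := invariant_star_tr x.
rewrite L_odotE R_circE L_starE circE !tmap2Dl !tmap2Dr.
set A := tmap2 (sp x) id w; set A' := tmap2 id (sp x) w; set B' := tmap2 id (pr x) w.
set C' := tmap2 id (sp^~ x) w; set D := tmap2 (pr^~ x) id w.
set D' := tmap2 id (pr^~ x) w => star_tr odot_eq.
have -> : A + (A' + B') = (A + D - (C' + D')) + (A' + B' + (C' + D') - D).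
  by apply/matrixP => i j; rewrite !mxE; ring.
by rewrite star_tr odot_eq !subrr addr0.
Qed.

Lemma invariant_odot_sp x : tmap2 id (odot^~ x) w + tmap2 (sp^~ x) id w = 0.
Proof.
have := invariant_odot_tr x; have := invariant_star_tr x.
rewrite L_odotE R_circE L_starE odotE !tmap2Dl !tmap2Dr.
set A' := tmap2 id (sp x) w; set B' := tmap2 id (pr x) w; set C := tmap2 (sp^~ x) id w.
set C' := tmap2 id (sp^~ x) w; set D := tmap2 (pr^~ x) id w.
set D' := tmap2 id (pr^~ x) w => star_tr odot_tr.
have -> : C' + B' + C = (A' + B' + (C' + D') - D) - (A' + D' - (C + D)).
  by apply/matrixP => i j; rewrite !mxE; ring.
by rewrite star_tr odot_tr !subrr.
Qed.

Lemma tpair_Sterm_invariant_r t : tpair Sterm t w = - tpair sp_term t w.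
Proof.
apply/eqP; rewrite -addr_eq0 tpairD; apply/eqP.
apply: tpair_eq0 => a b [[i j] k].
transitivity (e a 0 i *
    (tmap2 id (R_circ sp pr (e b)) w j k - tmap2 (L_odot sp pr (e b)) id w j k)).
  rewrite !tmap2_entry -sumrB mulr_sumr; apply: eq_bigr => c _.
  rewrite -sumrB mulr_sumr; apply: eq_bigr => d _.
  by rewrite !ffunE /= /R_circ /L_odot; ring.
by rewrite invariant_odot subrr mulr0.
Qed.

Lemma tpair_Sterm_invariant_l t : tpair Sterm w t = tpair circ_term w t.
Proof.
apply/eqP; rewrite -subr_eq0 tpairB tpairC; apply/eqP.
apply: tpair_eq0 => a b [[i j] k].
transitivity (- e b 0 k *
    (tmap2 id (odot^~ (e a)) w i j + tmap2 (sp^~ (e a)) id w i j)).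
  rewrite !tmap2_entry -big_split mulr_sumr; apply: eq_bigr => c _.
  rewrite -big_split mulr_sumr; apply: eq_bigr => d _.
  by rewrite !ffunE /=; ring.
have := congr1 (fun M : 'M[K]_n => M i j) (invariant_odot_sp (e a)).
by rewrite !mxE => ->; rewrite mulr0.
Qed.

Lemma tpair_circ_invariant_l t : tpair circ_term w t = - tpair sp_term (tau t) w.
Proof.
apply/eqP; rewrite -addr_eq0 tpairC tpair_taul tpairD; apply/eqP.
apply: tpair_eq0 => a b [[i j] k].
transitivity (e a 0 j *
    (tmap2 (sp (e b)) id w i k + tmap2 id (circ (e b)) w i k)).
  rewrite !tmap2_entry -big_split mulr_sumr; apply: eq_bigr => c _.
  rewrite -big_split mulr_sumr; apply: eq_bigr => d _.
  by rewrite !ffunE /=; ring.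
have := congr1 (fun M : 'M[K]_n => M i k) (invariant_sp_circ (e b)).
by rewrite !mxE => ->; rewrite mulr0.
Qed.

Lemma tpair_Sterm_taul t : tpair Sterm (tau t) w = tpair Sterm w t.
Proof.
by rewrite tpair_Sterm_invariant_r tpair_Sterm_invariant_l tpair_circ_invariant_l.
Qed.

End SymmetricInvariant.

Lemma Sr_tau r : Defs.invariant sp pr (r + tau r) -> Sr sp pr (tau r) = Sr sp pr r.
Proof.
move=> r_inv; have r_sym : tau (r + tau r) = r + tau r.
  by rewrite /tau linearD /= trmxK addrC.
rewrite !Sr_tpair; apply: (addIr (tpair Sterm (tau r) r)).
rewrite -tpairDr -tpairDl [tau r + r]addrC.
exact: tpair_Sterm_taul.
Qed.

End SOperator.

Theorem mainTheorem9 (K : fieldType) (n : nat) (sp pr : vec K n -> vec K n -> vec K n)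
  (hsp : is_bilinear sp) (hpr : is_bilinear pr)
  (hLD : leibniz_dendriform sp pr) (r : tensor2 K n) :
  (quasi_triangular sp pr r -> quasi_triangular sp pr (tau r)) /\
  (factorizable sp pr r -> factorizable sp pr (tau r)).
Proof.
have qt_tau : quasi_triangular sp pr r -> quasi_triangular sp pr (tau r).
  by case=> S0 r_inv; split; [rewrite Sr_tau | rewrite tau_sym].
by split=> // -[/qt_tau qt bij]; split; rewrite ?tau_sym.
Qed.
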